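(* Let $n$ be a positive odd integer. Then $$ \sum_{k=0}^{n-1}\frac{(aq;q^2)_k\,(q/a;q^2)_k}{(q^2;q^2)_k^2}\,q^{2k} \equiv (-1)^{(n-1)/2}q^{(n^2-1)/4}\pmod{(1-aq^n)(a-q^n)}. $$
   Context: $a,q$ are indeterminates. The $q$-shifted factorial is $(y;q)_0=1$ and $(y;q)_m=(1-y)(1-yq)\cdots(1-yq^{m-1})$ for $m\geqslant1$. For rational functions $A,B$ and a polynomial $P$, $A\equiv B\pmod P$ means $A-B=P\cdot C/D$ for polynomials $C,D$ with $D$ coprime to $P$. *)

(* Q[a,q] is modelled as {poly {poly rat}}:
   q = inner variable (constant polynomial 'X%:P), a = outer variable 'X.
   Rational functions in a,q = {fraction Rq} (fraction field of Q[a,q]). *)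
From HB Require Import structures.
From mathcomp Require Import all_boot all_order all_algebra.
Set Implicit Arguments. Unset Strict Implicit. Unset Printing Implicit Defensive.
Import Order.TTheory GRing.Theory Num.Theory.
Local Open Scope ring_scope.

Definition Rq := {poly {poly rat}}.
Definition RF := {fraction Rq}.

Notation "x %:F" := (@FracField.tofrac Rq x) (format "x %:F") : ring_scope.

Definition qv : Rq := ('X : {poly rat})%:P.
Definition av : Rq := 'X.

Definition qpoch (K : comNzRingType) (y q : K) (m : nat) : K :=
  \prod_(j < m) (1 - y * q ^+ j).

Definition dvdR (g x : Rq) : Prop := exists h : Rq, x = h * g.
Definition coprimeR (x y : Rq) : Prop :=
  forall g : Rq, dvdR g x -> dvdR g y -> g \is a GRing.unit.

Definition qcong (A B : RF) (P : Rq) : Prop :=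
  exists C D : Rq, D != 0 /\ coprimeR D P /\ A - B = P%:F * C%:F / D%:F.

From HB Require Import structures.
From mathcomp Require Import all_boot all_order all_algebra.
From mathcomp Require Import ring zify.
Set Implicit Arguments. Unset Strict Implicit. Unset Printing Implicit Defensive.
Import Order.TTheory GRing.Theory Num.Theory.
Local Open Scope ring_scope.

(* Multiply the difference of the two sides by a^(n-1) (q^2;q^2)_(n-1)^2: this clears
   all denominators and gives a polynomial N(a,q).  At a = q^n the sum becomes a
   terminating q-Chu-Vandermonde sum in base q^2 (which follows by creative telescoping)
   whose value is exactly the right-hand side, and the summand is invariant under
   a -> 1/a; so N vanishes at a = q^n and at a = q^-n.  Hence (a - q^n)(1 - a q^n)
   divides N up to a factor (q^2n - 1) q^(nd).  Every denominator that appears is a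
   power of a times a nonzero polynomial in q, and such elements are coprime to the
   modulus. *)

Section QPochhammer.
Variable R : comNzRingType.
Implicit Types y p : R.

Lemma qpochS y p k : qpoch y p k.+1 = qpoch y p k * (1 - y * p ^+ k).
Proof. by rewrite /qpoch big_ord_recr. Qed.

Lemma qpochSl y p k : qpoch y p k.+1 = (1 - y) * qpoch (y * p) p k.
Proof.
rewrite /qpoch big_ord_recl expr0 mulr1; congr (_ * _).
by apply: eq_bigr => i _; rewrite /bump /= exprS mulrA.
Qed.

Lemma qpoch_cat y p k m : (k <= m)%N ->
  qpoch y p m = qpoch y p k * \prod_(k <= j < m) (1 - y * p ^+ j).
Proof.
move=> le_km; rewrite /qpoch -!(big_mkord xpredT (fun j => 1 - y * p ^+ j)).
exact: big_cat_nat.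
Qed.

Lemma rmorph_qpoch (S : comNzRingType) (f : {rmorphism R -> S}) y p k :
  f (qpoch y p k) = qpoch (f y) (f p) k.
Proof.
rewrite rmorph_prod; apply: eq_bigr => j _.
by rewrite rmorphB rmorph1 rmorphM rmorphXn.
Qed.

End QPochhammer.

Lemma tofrac_inj (R : idomainType) : injective (@FracField.tofrac R).
Proof. by move=> x y /eqP; rewrite tofrac_eq => /eqP. Qed.

Lemma polyX_pow_neq1 (R : nzRingType) i : (0 < i)%N -> ('X : {poly R}) ^+ i != 1.
Proof.
move=> i_gt0; apply/eqP => Xi_eq1; have := size_polyXn R i.
by rewrite Xi_eq1 size_poly1 => -[i_eq0]; rewrite -i_eq0 in i_gt0.
Qed.

Lemma inj_rmorph_pow_neq1 (R S : nzRingType) (f : {rmorphism R -> S}) x i :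
  injective f -> x ^+ i != 1 -> f x ^+ i != 1.
Proof. by move=> f_inj; rewrite -rmorphXn -(rmorph1 f) (inj_eq f_inj). Qed.

Lemma qpoch_self_neq0 (R : idomainType) (p : R) k :
  (forall i, (0 < i)%N -> p ^+ i != 1) -> qpoch p p k != 0.
Proof.
move=> p_pow_neq1; rewrite /qpoch; apply/prodf_neq0 => j _.
by rewrite -exprS subr_eq0 eq_sym p_pow_neq1.
Qed.

Lemma qpoch_sqr_neq0 (R : idomainType) (q : R) k :
  (forall i, (0 < i)%N -> q ^+ i != 1) -> qpoch (q ^+ 2) (q ^+ 2) k != 0.
Proof.
move=> q_pow_neq1; apply: qpoch_self_neq0 => i i_gt0.
by rewrite -exprM q_pow_neq1 // muln_gt0.
Qed.

Section ChuVandermonde.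
Variables (K : fieldType) (p b : K).
Hypotheses (p_neq0 : p != 0) (p_pow_neq1 : forall i, (0 < i)%N -> p ^+ i != 1).

Let one_sub_pow_neq0 i : (0 < i)%N -> 1 - p ^+ i != 0.
Proof. by move=> i_gt0; rewrite subr_eq0 eq_sym p_pow_neq1. Qed.

Lemma qpoch_inv_pow_eq0 m k : (m < k)%N -> qpoch (p ^+ m)^-1 p k = 0.
Proof.
elim: k => // k IHk; rewrite ltnS leq_eqVlt qpochS => /orP[/eqP <-| /IHk ->].
  by rewrite mulVf ?expf_neq0 // subrr mulr0.
by rewrite mul0r.
Qed.

Definition chu_term m k :=
  qpoch b p k * qpoch (p ^+ m)^-1 p k * p ^+ k / qpoch p p k ^+ 2.

Lemma chu_termS m k : chu_term m k.+1 =
  chu_term m k * ((1 - b * p ^+ k) * (1 - (p ^+ m)^-1 * p ^+ k) * p / (1 - p ^+ k.+1) ^+ 2).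
Proof. by rewrite /chu_term !qpochS exprMn invfM [p ^+ k.+1]exprS; ring. Qed.

Lemma chu_term_succm m k :
  chu_term m k * (p ^+ m.+1 - 1) = chu_term m.+1 k * (p ^+ m.+1 - p ^+ k).
Proof.
set x := p ^+ m.+1; have x_neq0 : x != 0 by rewrite expf_neq0.
have shift : x^-1 * p = (p ^+ m)^-1 by rewrite /x exprSr invfM -mulrA mulVf ?mulr1.
have qpoch_eq := qpochSl x^-1 p k; rewrite qpochS shift in qpoch_eq.
have key : qpoch (p ^+ m)^-1 p k * (x - 1) = qpoch x^-1 p k * (x - p ^+ k).
  have -> : qpoch (p ^+ m)^-1 p k * (x - 1) = (1 - x^-1) * qpoch (p ^+ m)^-1 p k * x.
    by field.
  by rewrite -qpoch_eq; field.
rewrite /chu_term /x.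
transitivity (qpoch b p k * p ^+ k / qpoch p p k ^+ 2 * (qpoch (p ^+ m)^-1 p k * (x - 1))).
  by rewrite /x; ring.
by rewrite key /x; ring.
Qed.

Lemma chu_sum_rec m : \sum_(k < m.+2) chu_term m.+1 k =
  (b - p ^+ m.+1) / (1 - p ^+ m.+1) * \sum_(k < m.+1) chu_term m k.
Proof.
set x := p ^+ m.+1; set lam := (b - x) / (1 - x).
have x_neq0 : x != 0 by rewrite expf_neq0.
have x_neq1 : 1 - x != 0 by rewrite one_sub_pow_neq0.
have x_sub1_neq0 : x - 1 != 0 by rewrite -opprB oppr_eq0.
(* [G] is the creative-telescoping certificate of the recurrence in [m]. *)
pose G k := - x * (1 - p ^+ k) ^+ 2 / ((1 - x) ^+ 2 * p ^+ k) * chu_term m.+1 k.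
have step k : chu_term m.+1 k - lam * chu_term m k = G k.+1 - G k.
  have prev : chu_term m k = chu_term m.+1 k * (x - p ^+ k) / (x - 1).
    by rewrite -chu_term_succm mulfK.
  have pk_neq0 : p ^+ k != 0 by rewrite expf_neq0.
  have pk1_neq1 : 1 - p * p ^+ k != 0 by rewrite -exprS one_sub_pow_neq0.
  rewrite /G chu_termS prev /lam -/x [p ^+ k.+1]exprS.
  by field; rewrite pk_neq0 x_neq1 pk1_neq1 x_neq0 p_neq0 x_sub1_neq0.
have tel : \sum_(k < m.+1) (chu_term m.+1 k - lam * chu_term m k) = G m.+1 - G 0%N.
  rewrite -(big_mkord xpredT (fun k => chu_term m.+1 k - lam * chu_term m k)).
  by apply: telescope_sumr_eq => // k _; apply: step.
have G0 : G 0%N = 0 by rewrite /G expr0 subrr expr0n /= !mulr0 !mul0r.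
have Gm : G m.+1 = - chu_term m.+1 m.+1.
  by rewrite /G -/x -[RHS]mulN1r; congr (_ * _); field; rewrite x_neq0 x_neq1.
move: tel; rewrite sumrB -mulr_sumr G0 Gm subr0 => /eqP; rewrite subr_eq => /eqP tel.
by rewrite big_ord_recr /= tel addrC addNKr.
Qed.

Theorem q_chu_vandermonde m :
  \sum_(k < m.+1) chu_term m k = \prod_(j < m) (b - p ^+ j.+1) / qpoch p p m.
Proof.
elim: m => [|m IHm].
  by rewrite big_ord1 /chu_term /qpoch !big_ord0 expr0 !mulr1 expr1n invr1.
have x_neq1 : 1 - p ^+ m.+1 != 0 by rewrite one_sub_pow_neq0.
have qpoch_neq0 : qpoch p p m != 0 by apply: qpoch_self_neq0.
rewrite chu_sum_rec IHm big_ord_recr /= qpochS -exprS.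
by field; rewrite x_neq1 qpoch_neq0.
Qed.

End ChuVandermonde.

Lemma prod_sqr_pow_sub (R : comNzRingType) (q : R) m :
  \prod_(j < m) ((q ^+ 2) ^+ m.+1 - (q ^+ 2) ^+ j.+1) =
  (-1) ^+ m * q ^+ (m * m.+1) * qpoch (q ^+ 2) (q ^+ 2) m.
Proof.
set p := q ^+ 2.
have prod_pow k : \prod_(j < k) p ^+ j.+1 = q ^+ (k * k.+1).
  elim: k => [|k IHk]; first by rewrite big_ord0 expr0.
  by rewrite big_ord_recr /= IHk -exprM -exprD; congr (_ ^+ _); lia.
have -> : \prod_(j < m) (p ^+ m.+1 - p ^+ j.+1) =
    \prod_(j < m) ((-1) * p ^+ j.+1 * (1 - p ^+ (m - j))).
  apply: eq_bigr => j _.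
  have split_exp : (j.+1 + (m - j) = m.+1)%N by have := ltn_ord j; lia.
  by rewrite -{1}split_exp exprD; ring.
rewrite !big_split /= prodr_const card_ord prod_pow.
congr (_ * _); rewrite /qpoch (reindex_inj rev_ord_inj) /=.
apply: eq_bigr => j _; rewrite -exprS.
by congr (1 - p ^+ _); have := ltn_ord j; lia.
Qed.

Section CongruenceSum.
Variable n : nat.

Definition cong_sum (K : fieldType) (a q : K) :=
  \sum_(k < n) qpoch (a * q) (q ^+ 2) k * qpoch (q / a) (q ^+ 2) k
     / qpoch (q ^+ 2) (q ^+ 2) k ^+ 2 * q ^+ (2 * k).

Definition cong_rhs (R : comNzRingType) (q : R) :=
  (-1) ^+ ((n - 1) %/ 2) * q ^+ ((n ^ 2 - 1) %/ 4).

Definition cong_denom (R : comNzRingType) (q : R) := qpoch (q ^+ 2) (q ^+ 2) n.-1 ^+ 2.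

(* [a ^+ n.-1 * cong_denom q * (cong_sum a q - cong_rhs q)] with the denominators
   cleared, so that it makes sense in any commutative ring (see [cong_numerE]). *)
Definition cong_numer (R : comNzRingType) (a q : R) :=
  \sum_(k < n) a ^+ (n.-1 - k) * qpoch (a * q) (q ^+ 2) k
      * \prod_(j < k) (a - q * (q ^+ 2) ^+ j) * q ^+ (2 * k)
      * (\prod_(k <= j < n.-1) (1 - q ^+ 2 * (q ^+ 2) ^+ j)) ^+ 2
  - a ^+ n.-1 * cong_denom q * cong_rhs q.

Section Morphism.
Variables (R S : comNzRingType) (f : {rmorphism R -> S}).

Lemma rmorph_cong_denom q : f (cong_denom q) = cong_denom (f q).
Proof. by rewrite rmorphXn rmorph_qpoch rmorphXn. Qed.

Lemma rmorph_cong_numer a q : f (cong_numer a q) = cong_numer (f a) (f q).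
Proof.
rewrite rmorphB rmorph_sum; congr (_ - _); last first.
  rewrite rmorphM [f (_ * cong_denom q)]rmorphM rmorph_cong_denom rmorphXn.
  by rewrite /cong_rhs rmorphM !rmorphXn rmorphN rmorph1.
apply: eq_bigr => k _.
rewrite !rmorphM !rmorphXn rmorph_qpoch rmorphM !rmorphXn !rmorph_prod.
congr (_ * _ * _ * _ * (_ ^+ 2)); apply: eq_bigr => j _.
  by rewrite rmorphB rmorphM !rmorphXn.
by rewrite rmorphB rmorph1 rmorphM !rmorphXn.
Qed.

End Morphism.

Lemma horner_map_cong_numer (R K : comNzRingType) (iota : {rmorphism R -> K})
    (q : R) (x : K) :
  (map_poly iota (cong_numer 'X q%:P)).[x] = cong_numer x (iota q).
Proof.
pose ev : {rmorphism {poly R} -> K} := horner_morph (fun a => mulrC x (iota a)).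
have evX : ev 'X = x by exact: horner_morphX.
have evC : ev q%:P = iota q by exact: horner_morphC.
by have := rmorph_cong_numer ev 'X q%:P; rewrite evX evC.
Qed.

Lemma cong_numerE (K : fieldType) (a q : K) : a != 0 ->
    (forall k, qpoch (q ^+ 2) (q ^+ 2) k != 0) ->
  cong_numer a q = a ^+ n.-1 * cong_denom q * (cong_sum a q - cong_rhs q).
Proof.
move=> a_neq0 qpoch_neq0; rewrite /cong_numer /cong_sum mulrBr mulr_sumr.
congr (_ - _); apply: eq_bigr => k _.
have le_kn : (k <= n.-1)%N by have := ltn_ord k; lia.
have prod_eq : \prod_(j < k) (a - q * (q ^+ 2) ^+ j) = a ^+ k * qpoch (q / a) (q ^+ 2) k.
  elim: (nat_of_ord k) => [|i IHi]; first by rewrite big_ord0 /qpoch big_ord0 mulr1.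
  by rewrite big_ord_recr /= IHi qpochS [a ^+ i.+1]exprSr; field.
have split_pow : a ^+ n.-1 = a ^+ (n.-1 - k) * a ^+ k by rewrite -exprD subnK.
rewrite prod_eq /cong_denom (qpoch_cat _ _ le_kn) split_pow.
by field; rewrite qpoch_neq0.
Qed.

Lemma cong_sumV (K : fieldType) (a q : K) : cong_sum a^-1 q = cong_sum a q.
Proof.
rewrite /cong_sum; apply: eq_bigr => k _.
by rewrite invrK [a^-1 * q]mulrC [q * a]mulrC [qpoch (q / a) _ _ * _]mulrC.
Qed.

End CongruenceSum.

Lemma cong_rhs_odd (R : comNzRingType) (q : R) m :
  cong_rhs m.*2.+1 q = (-1) ^+ m * q ^+ (m * m.+1).
Proof.
rewrite /cong_rhs; congr ((-1) ^+ _ * q ^+ _); first by rewrite subn1 /= -muln2 mulnK.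
have -> : ((m.*2.+1) ^ 2 - 1 = (m * m.+1) * 4)%N by rewrite -!muln2 expnS expn1; lia.
by rewrite mulnK.
Qed.

(* At [a = q ^+ n] the sum is a terminating q-Chu-Vandermonde sum in base [q ^+ 2]. *)
Lemma cong_sum_at_pow (K : fieldType) (q : K) m :
    q != 0 -> (forall i, (0 < i)%N -> q ^+ i != 1) ->
  cong_sum m.*2.+1 (q ^+ m.*2.+1) q = cong_rhs m.*2.+1 q.
Proof.
move=> q_neq0 q_pow_neq1; rewrite /cong_sum; set p := q ^+ 2.
have p_neq0 : p != 0 by rewrite expf_neq0.
have p_pow_neq1 i : (0 < i)%N -> p ^+ i != 1.
  by move=> i_gt0; rewrite -exprM q_pow_neq1 // muln_gt0.
have -> : q ^+ m.*2.+1 * q = p ^+ m.+1 by rewrite -exprSr -exprM; congr (_ ^+ _); lia.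
have -> : q / q ^+ m.*2.+1 = (p ^+ m)^-1.
  by rewrite exprSr invfM mulrCA mulfV // mulr1 -exprM -mul2n.
have -> : \sum_(k < m.*2.+1) qpoch (p ^+ m.+1) p k * qpoch (p ^+ m)^-1 p k
      / qpoch p p k ^+ 2 * q ^+ (2 * k) = \sum_(k < m.+1) chu_term p (p ^+ m.+1) m k.
  rewrite (big_ord_widen m.*2.+1 (chu_term p (p ^+ m.+1) m)); last by lia.
  rewrite [RHS]big_mkcond /=; apply: eq_bigr => k _.
  case: ifP => [_ | /negbT]; first by rewrite /chu_term exprM mulrAC.
  by rewrite -leqNgt => lt_mk; rewrite qpoch_inv_pow_eq0 ?mulr0 ?mul0r.
rewrite q_chu_vandermonde // prod_sqr_pow_sub mulfK ?cong_rhs_odd //.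
exact: qpoch_self_neq0.
Qed.

Lemma cong_numer_pow_roots (K : fieldType) (q : K) n : odd n ->
    q != 0 -> (forall i, (0 < i)%N -> q ^+ i != 1) ->
  cong_numer n (q ^+ n) q = 0 /\ cong_numer n (q ^+ n)^-1 q = 0.
Proof.
move=> odd_n q_neq0 q_pow_neq1.
have [m n_eq] : exists m, n = m.*2.+1.
  by exists n./2; rewrite -[n in LHS]odd_double_half odd_n.
have qpoch_neq0 k := qpoch_sqr_neq0 k q_pow_neq1.
have qn_neq0 : q ^+ n != 0 by rewrite expf_neq0.
rewrite !cong_numerE ?invr_eq0 // cong_sumV n_eq cong_sum_at_pow //.
by rewrite subrr !mulr0.
Qed.

Section RootFactors.
Variable R : comNzRingType.

Lemma linear_decomp (u v : R) (X : {poly R}) :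
  exists d h W, v%:P ^+ d * X = h%:P + (v%:P * 'X - u%:P) * W.
Proof.
elim/poly_ind: X => [|X a [d [h [W decomp]]]].
  by exists 0%N, 0, 0; rewrite !mulr0 addr0.
exists d.+1, (u * h + v ^+ d.+1 * a), (h%:P + v%:P * 'X * W).
have -> : v%:P ^+ d.+1 * (X * 'X + a%:P) =
    v%:P * 'X * (v%:P ^+ d * X) + (v ^+ d.+1 * a)%:P.
  by rewrite polyCM rmorphXn exprS; ring.
by rewrite decomp polyCD polyCM; ring.
Qed.

Variables (K : comNzRingType) (iota : {rmorphism R -> K}).
Hypothesis iota_inj : injective iota.

Lemma factor_of_root (u v : R) (z : K) (X : {poly R}) :
    iota v * z = iota u -> (map_poly iota X).[z] = 0 ->
  exists d W, v%:P ^+ d * X = (v%:P * 'X - u%:P) * W.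
Proof.
move=> vz_eq_u X_root; have [d [h [W decomp]]] := linear_decomp u v X.
exists d, W; suff h_eq0 : h = 0 by rewrite decomp h_eq0 add0r.
pose ev : {rmorphism {poly R} -> K} := horner_morph (fun a => mulrC z (iota a)).
have evC c : ev c%:P = iota c by exact: horner_morphC.
have evX : ev 'X = z by exact: horner_morphX.
move: decomp => /(congr1 ev); rewrite rmorphM [ev X]X_root mulr0.
rewrite rmorphD rmorphM rmorphB rmorphM !evC evX vz_eq_u.
by rewrite subrr mul0r addr0 -(rmorph0 iota) => /esym /iota_inj.
Qed.

End RootFactors.

Lemma mul_dvd_of_roots (R : comNzRingType) (K : fieldType) (iota : {rmorphism R -> K})
    (c : R) (X : {poly R}) :
    injective iota -> iota c != 0 ->
    (map_poly iota X).[iota c] = 0 -> (map_poly iota X).[(iota c)^-1] = 0 ->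
  exists d C, ((c ^+ 2 - 1) * c ^+ d)%:P * X = (1 - 'X * c%:P) * ('X - c%:P) * C.
Proof.
move=> iota_inj c_neq0 root_c root_inv_c.
have one_c : iota 1 * iota c = iota c by rewrite rmorph1 mul1r.
have c_inv_c : iota c * (iota c)^-1 = iota 1 by rewrite rmorph1 mulfV.
have [d0 [Y factor_c]] := factor_of_root iota_inj one_c root_c.
rewrite polyC1 expr1n !mul1r in factor_c.
have [d [W factor_inv_c]] := factor_of_root iota_inj c_inv_c root_inv_c.
exists d, (c%:P * W - c%:P ^+ d * Y).
(* (c 'X - 1) - c ('X - c) = c ^+ 2 - 1 *)
transitivity ((c%:P * 'X - 1) * c%:P ^+ d * X - c%:P * ('X - c%:P) * (c%:P ^+ d * X)).
  by rewrite polyCM polyCB polyC1 !rmorphXn; ring.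
by rewrite factor_inv_c polyC1 {1}factor_c; ring.
Qed.

Section Coprimality.
Variables (R : idomainType) (c : R).
Hypothesis c_neq0 : c != 0.
Local Notation P := ((1 - 'X * c%:P) * ('X - c%:P)).

Lemma unit_of_dvd_const (g : {poly R}) (y : R) : y != 0 ->
  (exists h, P = h * g) -> (exists h, y%:P = h * g) -> g \is a GRing.unit.
Proof.
move=> y_neq0 [h P_eq] [h' y_eq].
have : h' * g != 0 by rewrite -y_eq polyC_eq0.
rewrite mulf_eq0 negb_or => /andP[h'_neq0 g_neq0].
have size_g : size g = 1%N.
  have := size_mul h'_neq0 g_neq0; rewrite -y_eq size_polyC y_neq0.
  by rewrite -!size_poly_gt0 in h'_neq0 g_neq0; lia.
have g_const : g = (g`_0)%:P by apply: size1_polyC; rewrite size_g.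
have P_expand : P = (- c)%:P + (1 + c ^+ 2)%:P * 'X + (- c)%:P * 'X ^+ 2.
  by rewrite polyCN polyCD polyC1 rmorphXn; ring.
have P_coef i : P`_i = h`_i * g`_0 by rewrite P_eq {1}g_const coefMC.
have coef0 := P_coef 0%N; have coef1 := P_coef 1%N.
rewrite P_expand !coefD !coefCM !coefC !coefX !coefXn /= in coef0 coef1.
(* the coefficients [- c] and [1 + c ^+ 2] of [P] generate the unit ideal *)
rewrite poly_unitE size_g eqxx /=; apply/unitrPr; exists (h`_1 + c * h`_0).
transitivity (h`_1 * g`_0 + c * (h`_0 * g`_0)); first by ring.
by rewrite -coef0 -coef1; ring.
Qed.

Lemma unit_of_dvd_Xn_const (g : {poly R}) (y : R) k : y != 0 ->
  (exists h, P = h * g) -> (exists h, 'X ^+ k * y%:P = h * g) -> g \is a GRing.unit.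
Proof.
elim: k y => [|k IHk] y y_neq0 dvd_P [h y_eq].
  by apply: (unit_of_dvd_const y_neq0 dvd_P); exists h; rewrite -y_eq expr0 mul1r.
apply: (IHk (c * y)); rewrite ?mulf_neq0 //; case: dvd_P => h' P_eq.
(* ['X * (1 + c ^+ 2 - 'X * c) - P = c] *)
exists (h * (1 + c%:P ^+ 2 - 'X * c%:P) - 'X ^+ k * y%:P * h').
have -> : 'X ^+ k * (c * y)%:P =
    'X ^+ k.+1 * y%:P * (1 + c%:P ^+ 2 - 'X * c%:P) - 'X ^+ k * y%:P * P.
  by rewrite polyCM exprS; ring.
by rewrite y_eq P_eq; ring.
Qed.

End Coprimality.

Lemma qcong_of_mul_dvd (A B : RF) (N D E C P : Rq) :
    N%:F = D%:F * (A - B) -> E * N = P * C -> E * D != 0 -> coprimeR (E * D) P ->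
  qcong A B P.
Proof.
move=> N_eq dvd_N ED_neq0 coprime_ED; exists C, (E * D); split=> //; split=> //.
have := ED_neq0; rewrite -tofrac_eq0 tofracM mulf_eq0 negb_or => /andP[E_neq0 D_neq0].
have := congr1 (@FracField.tofrac Rq) dvd_N; rewrite !tofracM N_eq => EN_eq.
by rewrite -EN_eq mulrA [_ * (A - B)]mulrC (mulfK (mulf_neq0 E_neq0 D_neq0)).
Qed.

Lemma cong_numer_mul_dvd (R : comNzRingType) (K : fieldType) (iota : {rmorphism R -> K})
    (q : R) n :
    injective iota -> odd n -> q != 0 -> (forall i, (0 < i)%N -> q ^+ i != 1) ->
  exists d C, (((q ^+ n) ^+ 2 - 1) * (q ^+ n) ^+ d)%:P * cong_numer n 'X q%:P =
              (1 - 'X * (q ^+ n)%:P) * ('X - (q ^+ n)%:P) * C.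
Proof.
move=> iota_inj odd_n q_neq0 q_pow_neq1.
have iq_neq0 : iota q != 0 by rewrite -(rmorph0 iota) (inj_eq iota_inj).
have iq_pow_neq1 i : (0 < i)%N -> iota q ^+ i != 1.
  by move=> i_gt0; apply: inj_rmorph_pow_neq1 iota_inj (q_pow_neq1 _ i_gt0).
have [root_qn root_inv_qn] := cong_numer_pow_roots odd_n iq_neq0 iq_pow_neq1.
apply: (mul_dvd_of_roots iota_inj); rewrite ?horner_map_cong_numer ?rmorphXn ?expf_neq0 //.
Qed.

Lemma tofrac_cong_numer n :
  (cong_numer n av qv)%:F =
  (av ^+ n.-1 * (cong_denom n 'X)%:P)%:F * (cong_sum n av%:F qv%:F - cong_rhs n qv%:F).
Proof.
have aF_neq0 : av%:F != 0 by rewrite tofrac_eq0 polyX_eq0.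
have qF_pow_neq1 i : (0 < i)%N -> qv%:F ^+ i != 1.
  move=> i_gt0; apply: inj_rmorph_pow_neq1 (@tofrac_inj _) _.
  exact: inj_rmorph_pow_neq1 (@polyC_inj _) (polyX_pow_neq1 _ i_gt0).
rewrite rmorph_cong_numer (cong_numerE n aF_neq0 (fun k => qpoch_sqr_neq0 k qF_pow_neq1)).
by rewrite tofracM tofracXn !rmorph_cong_denom.
Qed.

Theorem corollary4p3 (n : nat) (hn0 : (0 < n)%N) (hodd : odd n) :
  qcong
    (\sum_(k < n)
        qpoch (av%:F * qv%:F) (qv%:F ^+ 2) k * qpoch (qv%:F / av%:F) (qv%:F ^+ 2) k
        / (qpoch (qv%:F ^+ 2) (qv%:F ^+ 2) k) ^+ 2 * qv%:F ^+ (2 * k))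
    ((-1) ^+ ((n - 1) %/ 2) * qv%:F ^+ ((n ^ 2 - 1) %/ 4))
    ((1 - av * qv ^+ n) * (av - qv ^+ n)).
Proof.
have X_pow_neq1 i : (0 < i)%N -> ('X : {poly rat}) ^+ i != 1 by exact: polyX_pow_neq1.
have X_neq0 : ('X : {poly rat}) != 0 by rewrite polyX_eq0.
have [d [C numer_dvd]] := cong_numer_mul_dvd (@tofrac_inj _) hodd X_neq0 X_pow_neq1.
set c := 'X ^+ n in numer_dvd; have c_neq0 : c != 0 by rewrite expf_neq0.
set y : {poly rat} := (c ^+ 2 - 1) * c ^+ d * cong_denom n 'X.
have y_neq0 : y != 0.
  by rewrite !mulf_neq0 ?expf_neq0 ?qpoch_sqr_neq0 // subr_eq0 -exprM X_pow_neq1 // muln_gt0 hn0.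
have denomE : ((c ^+ 2 - 1) * c ^+ d)%:P * (av ^+ n.-1 * (cong_denom n 'X)%:P) =
    'X ^+ n.-1 * y%:P by rewrite /y !polyCM; ring.
have modulusE : (1 - av * qv ^+ n) * (av - qv ^+ n) = (1 - 'X * c%:P) * ('X - c%:P).
  by rewrite /qv rmorphXn.
change (qcong (cong_sum n av%:F qv%:F) (cong_rhs n qv%:F)
  ((1 - av * qv ^+ n) * (av - qv ^+ n))).
rewrite modulusE; apply: (qcong_of_mul_dvd (tofrac_cong_numer n) numer_dvd).
  by rewrite denomE mulf_neq0 ?expf_neq0 ?polyX_eq0 ?polyC_eq0.
move=> g; rewrite /dvdR denomE => dvd_D dvd_P.
exact: (unit_of_dvd_Xn_const c_neq0 y_neq0 dvd_P dvd_D).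
Qed.
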